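(* Let $d\geq1$ be an integer and $\mathbb G=V_1\times V_2$ a step-two Carnot group. Then $\mathcal A_h(\mathbb G)=\mathcal A(V_1\times V_2)$ if and only if $\mathcal A_h(\mathbb G\times\mathbb R^d)=\mathcal A((V_1\oplus\mathbb R^d)\times V_2)$.
   Context: A step-two Carnot group is $\mathbb G=V_1\times V_2$ ($V_1,V_2$ finite-dimensional real vector spaces, $V_2\ne\{0\}$) with a bilinear skew-symmetric $[\cdot,\cdot]:V_1\times V_1\to V_2$ whose image spans $V_2$, and group law $(x,z)\cdot(x',z')=(x+x',z+z'+[x,x'])$. $\mathcal A_h(\mathbb G)$ is the space of maps $f:\mathbb G\to\mathbb R$ such that for all $(x,z)\in\mathbb G$, $y\in V_1$, $t\mapsto f((x,z)\cdot(ty,0))$ is affine; $\mathcal A(W)$ is the space of maps affine in the usual sense on a vector space $W$. $\mathbb G\times\mathbb R^d$ is the step-two Carnot group $(V_1\oplus\mathbb R^d)\times V_2$ with bracket $[x+u,x'+u']:=[x,x']$ for $x,x'\in V_1$, $u,u'\in\mathbb R^d$. *)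

From HB Require Import structures.
From mathcomp Require Import all_boot all_order all_algebra.
From mathcomp Require Import reals.
Set Implicit Arguments. Unset Strict Implicit. Unset Printing Implicit Defensive.
Import Order.TTheory GRing.Theory Num.Theory.
Local Open Scope ring_scope.

Section Carnot.
Variable R : realType.

Definition cmul (V1 V2 : lmodType R) (br : V1 -> V1 -> V2)
  (p q : V1 * V2) : V1 * V2 :=
  (p.1 + q.1, p.2 + q.2 + br p.1 q.1).

Definition step_two_carnot (n m : nat) (br : 'rV[R]_n -> 'rV[R]_n -> 'rV[R]_m) :=
  [/\ (0 < m)%N,
      (forall a x x' y, br (a *: x + x') y = a *: br x y + br x' y),
      (forall a x y y', br x (a *: y + y') = a *: br x y + br x y'),
      (forall x y, br x y = - br y x)
    & (forall z : 'rV[R]_m, exists (k : nat) (c : 'I_k -> R) (xs ys : 'I_k -> 'rV[R]_n),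
          z = \sum_(i < k) c i *: br (xs i) (ys i))].

(* A_h(G): f is affine along every horizontal line t |-> p.(t y, 0). *)
Definition horiz_affine (V1 V2 : lmodType R) (br : V1 -> V1 -> V2)
  (f : V1 * V2 -> R) : Prop :=
  forall (p : V1 * V2) (y : V1), exists a b : R,
    forall t : R, f (cmul br p (t *: y, 0)) = a * t + b.

Definition affine (W : lmodType R) (f : W -> R) : Prop :=
  exists (L : W -> R) (c : R),
    (forall a u v, L (a *: u + v) = a * L u + L v) /\ (forall w, f w = L w + c).

(* Bracket of G x R^d on (V1 (+) R^d) x V2: [x+u, x'+u'] = [x,x']. *)
Definition br_ext (V1 V2 : lmodType R) (d : nat) (br : V1 -> V1 -> V2)
  (p q : V1 * 'rV[R]_d) : V2 := br p.1 q.1.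

End Carnot.

From HB Require Import structures.
From mathcomp Require Import all_boot all_order all_algebra.
From mathcomp Require Import reals.
From mathcomp Require Import ring lra.
Set Implicit Arguments. Unset Strict Implicit. Unset Printing Implicit Defensive.
Import GRing.Theory Num.Theory.
Local Open Scope ring_scope.

(* Let F be affine along horizontal lines of G x R^d.  Each slice F(., u, .) is
   affine along horizontal lines of G, hence affine, and each fibre
   u |-> F(x, u, z) is affine on every line of R^d, hence affine.  So
   F(x, u, z) = F 0 + l(x, z) + h(u) + D((x, z), u) with l, h linear and the
   cross term D linear in each argument.  On the horizontal line
   t |-> ((x + t y, t v), t [x, y]) the cross term contributes
   t^2 D((y, [x, y]), v), which must vanish; as brackets span V2, D = 0 and F is
   affine.  Conversely, a function on G lifts to G x R^d by ignoring u. *)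

Section LinearForms.
Variable R : realType.

Definition linear_form (W : lmodType R) (L : W -> R) : Prop :=
  forall a u v, L (a *: u + v) = a * L u + L v.

Definition affine_line (g : R -> R) : Prop :=
  exists a b : R, forall t, g t = a * t + b.

Variable W : lmodType R.
Implicit Types (L f : W -> R) (g : R -> R).

Lemma linear_form0 L : linear_form L -> L 0 = 0.
Proof. by move=> Llin; have := Llin 1 0 0; rewrite scaler0 addr0 mul1r; lra. Qed.

Lemma linear_formD L u v : linear_form L -> L (u + v) = L u + L v.
Proof. by move=> Llin; rewrite -[u]scale1r Llin mul1r scale1r. Qed.

Lemma linear_formZ L a u : linear_form L -> L (a *: u) = a * L u.
Proof. by move=> Llin; rewrite -[a *: u]addr0 Llin (linear_form0 Llin) addr0. Qed.

Lemma affineP f : affine f <-> linear_form (fun w => f w - f 0).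
Proof.
split=> [[L [c [Llin fE]]] a u v | flin].
  by rewrite !fE Llin (linear_form0 Llin); ring.
by exists (fun w => f w - f 0), (f 0); split=> // w; rewrite subrK.
Qed.

Lemma affine_lineE g : affine_line g -> forall t, g t = g 0 + t * (g 1 - g 0).
Proof. by case=> a [b gE] t; rewrite !gE; ring. Qed.

Lemma affine_line_quadratic g a b c :
  affine_line g -> (forall t, g t = a + b * t + c * t ^+ 2) -> c = 0.
Proof.
move=> [a' [b' gE]] gE'.
have := gE 0; have := gE 1; have := gE (-1).
by rewrite !gE' !expr2; lra.
Qed.

Lemma affine_of_lines f :
  (forall p v, affine_line (fun t => f (p + t *: v))) -> affine f.
Proof.
move=> fl; apply/affineP; pose h w := f w - f 0.
have hZ t v : h (t *: v) = t * h v.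
  by have := affine_lineE (fl 0 v) t; rewrite /h !add0r scale0r scale1r => ->; ring.
have hD u v : h (u + v) = h u + h v.
  (* On the line from 2u to 2v, f (u + v) is the midpoint value. *)
  have := affine_lineE (fl (2 *: u) (v - u)) 2.
  have -> : 2 *: u + 2 *: (v - u) = 2 *: v by rewrite -scalerDr addrC subrK.
  have -> : 2 *: u + 1 *: (v - u) = u + v.
    by rewrite scale1r scaler_nat mulr2n addrC addrA subrK addrC.
  by rewrite scale0r addr0; have := hZ 2 u; have := hZ 2 v; rewrite /h; lra.
by move=> a u v; have := hD (a *: u) v; rewrite hZ.
Qed.

Lemma linear_form_pairr (V : lmodType R) (L : V * W -> R) :
  linear_form L -> linear_form (fun z => L (0, z)).
Proof.
move=> Llin a z z'; have := Llin a (0, z) (0, z').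
by rewrite -[a *: (0, z) + _]/(a *: 0 + 0, a *: z + z') scaler0 addr0.
Qed.

End LinearForms.

Section HorizontalLines.
Variables (R : realType) (V1 V2 : lmodType R) (br : V1 -> V1 -> V2).
Hypothesis br_linr : forall a x y y', br x (a *: y + y') = a *: br x y + br x y'.

Lemma br0r x : br x 0 = 0.
Proof. by have := br_linr 1 x 0 0; rewrite scaler0 addr0 scale1r -{1}[br x 0]addr0 => /addrI. Qed.

Lemma brZr a x y : br x (a *: y) = a *: br x y.
Proof. by rewrite -[a *: y]addr0 br_linr br0r addr0. Qed.

Lemma cmul_line x z y t :
  cmul br (x, z) (t *: y, 0) = (x + t *: y, z + t *: br x y).
Proof. by rewrite /cmul /= addr0 brZr. Qed.

Lemma affine_horiz_affine f : affine f -> horiz_affine br f.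
Proof.
move=> [L [c [Llin fE]]] [x z] y; exists (L (y, br x y)), (L (x, z) + c) => t.
rewrite cmul_line fE [_ * t]mulrC addrA -Llin.
by rewrite [x + _]addrC [z + _]addrC.
Qed.

End HorizontalLines.

Section ProductBracket.
Variables (R : realType) (V1 V2 : lmodType R) (d : nat) (br : V1 -> V1 -> V2).
Hypothesis br_linr : forall a x y y', br x (a *: y + y') = a *: br x y + br x y'.

Lemma br_ext_linr a (p q q' : V1 * 'rV[R]_d) :
  br_ext br p (a *: q + q') = a *: br_ext br p q + br_ext br p q'.
Proof. exact: br_linr. Qed.

Lemma cmul_ext_line x (u : 'rV[R]_d) z y v t :
  cmul (br_ext br) ((x, u), z) (t *: (y, v), 0) =
  ((x + t *: y, u + t *: v), z + t *: br x y).
Proof. by rewrite (cmul_line br_ext_linr). Qed.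

Lemma horiz_affine_proj (f : V1 * V2 -> R) :
  horiz_affine br f ->
  horiz_affine (br_ext br) (fun w : (V1 * 'rV[R]_d) * V2 => f (w.1.1, w.2)).
Proof. by move=> hf p y; exact: hf (p.1.1, p.2) y.1. Qed.

Lemma horiz_affine_affine_of_ext :
  (forall F : (V1 * 'rV[R]_d) * V2 -> R, horiz_affine (br_ext br) F -> affine F) ->
  forall f : V1 * V2 -> R, horiz_affine br f -> affine f.
Proof.
move=> affine_ext f /horiz_affine_proj /affine_ext /affineP Flin.
by apply/affineP => a [x z] [x' z']; exact: (Flin a ((x, 0), z) ((x', 0), z')).
Qed.

End ProductBracket.

Section ExtensionAffine.
Variables (R : realType) (V1 V2 : lmodType R) (d : nat) (br : V1 -> V1 -> V2).
Hypothesis br_linl : forall a x x' y, br (a *: x + x') y = a *: br x y + br x' y.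
Hypothesis br_linr : forall a x y y', br x (a *: y + y') = a *: br x y + br x y'.
Hypothesis br_span : forall z : V2, exists (k : nat) (c : 'I_k -> R) (xs ys : 'I_k -> V1),
  z = \sum_(i < k) c i *: br (xs i) (ys i).
Hypothesis affine_G : forall f : V1 * V2 -> R, horiz_affine br f -> affine f.
Variable F : (V1 * 'rV[R]_d) * V2 -> R.
Hypothesis F_horiz : horiz_affine (br_ext br) F.

Lemma br0l y : br 0 y = 0.
Proof. by have := br_linl 1 0 0 y; rewrite scaler0 addr0 scale1r -{1}[br 0 y]addr0 => /addrI. Qed.

Lemma linear_form_span_eq0 (L : V2 -> R) :
  linear_form L -> (forall x y, L (br x y) = 0) -> forall z, L z = 0.
Proof.
move=> Llin Lbr z; have [k [c [xs [ys ->]]]] := br_span z.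
elim/big_ind: _ => [|z1 z2 L1 L2|i _]; first exact: linear_form0.
  by rewrite linear_formD // L1 L2 addr0.
by rewrite linear_formZ // Lbr mulr0.
Qed.

Lemma slice_affine u : affine (fun w : V1 * V2 => F ((w.1, u), w.2)).
Proof.
apply: affine_G => -[x z] y; have [a [b Fl]] := F_horiz ((x, u), z) (y, 0).
by exists a, b => t; rewrite -Fl cmul_ext_line // cmul_line // scaler0 addr0.
Qed.

Lemma fiber_affine x z : affine (fun u => F ((x, u), z)).
Proof.
apply: affine_of_lines => p v; have [a [b Fl]] := F_horiz ((x, p), z) (0, v).
by exists a, b => t; rewrite -Fl cmul_ext_line // scaler0 br0r // scaler0 !addr0.
Qed.

Definition base_lin (w : V1 * V2) := F ((w.1, 0), w.2) - F 0.
Definition fiber_lin (u : 'rV[R]_d) := F ((0, u), 0) - F 0.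
Definition cross_term (w : V1 * V2) (u : 'rV[R]_d) :=
  F ((w.1, u), w.2) - F 0 - base_lin w - fiber_lin u.

Lemma base_lin_linear : linear_form base_lin.
Proof. exact: (affineP _).1 (slice_affine 0). Qed.

Lemma fiber_lin_linear : linear_form fiber_lin.
Proof. exact: (affineP _).1 (fiber_affine 0 0). Qed.

Lemma cross_term_linearl u : linear_form (cross_term^~ u).
Proof.
move=> a w w'; have := (affineP _).1 (slice_affine u) a w w'.
by rewrite /cross_term base_lin_linear /fiber_lin /base_lin /=; lra.
Qed.

Lemma cross_term_linearr w : linear_form (cross_term w).
Proof.
move=> a u u'; have := (affineP _).1 (fiber_affine w.1 w.2) a u u'.
by rewrite /cross_term fiber_lin_linear /base_lin /=; lra.
Qed.

Lemma F_decomp x u z :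
  F ((x, u), z) = F 0 + base_lin (x, z) + fiber_lin u + cross_term (x, z) u.
Proof. by rewrite /cross_term; ring. Qed.

Lemma cross_term_bracket x y v : cross_term (y, br x y) v = 0.
Proof.
have Fline t : F ((x + t *: y, t *: v), t *: br x y) = (F 0 + base_lin (x, 0)) +
    (base_lin (y, br x y) + fiber_lin v + cross_term (x, 0) v) * t +
    cross_term (y, br x y) v * t ^+ 2.
  have -> : x + t *: y = (t *: (y, br x y) + (x, 0)).1 by rewrite addrC.
  have -> : t *: br x y = (t *: (y, br x y) + (x, 0)).2 by rewrite /= addr0.
  rewrite F_decomp -surjective_pairing base_lin_linear.
  rewrite (linear_formZ _ _ fiber_lin_linear) (linear_formZ _ _ (cross_term_linearr _)).
  by rewrite cross_term_linearl; ring.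
apply: (affine_line_quadratic (F_horiz ((x, 0), 0) (y, v))) => t.
by rewrite cmul_ext_line // !add0r Fline.
Qed.

Lemma cross_term_eq0 w u : cross_term w u = 0.
Proof.
have Llin := cross_term_linearl u.
have cross_y0 y : cross_term (y, 0) u = 0 by rewrite -(br0l y) cross_term_bracket.
have cross_0br x y : cross_term (0, br x y) u = 0.
  have := linear_formD (y, 0) (0, br x y) Llin.
  by rewrite -[(y, 0) + _]/(y + 0, 0 + br x y) addr0 add0r cross_term_bracket cross_y0 add0r.
have cross_0z z : cross_term (0, z) u = 0.
  by apply: linear_form_span_eq0 (linear_form_pairr Llin) _ z => x y; exact: cross_0br.
case: w => x z; have := linear_formD (x, 0) (0, z) Llin.
by rewrite -[(x, 0) + _]/(x + 0, 0 + z) addr0 add0r cross_y0 cross_0z addr0.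
Qed.

Lemma F_split x u z : F ((x, u), z) = F 0 + base_lin (x, z) + fiber_lin u.
Proof. by rewrite F_decomp cross_term_eq0 addr0. Qed.

Lemma horiz_affine_ext_affine : affine F.
Proof.
apply/affineP => a [[x u] z] [[x' u'] z'].
rewrite -[a *: _ + _]/((a *: x + x', a *: u + u'), a *: z + z').
rewrite (F_split (a *: x + x')) (F_split x) (F_split x').
by rewrite (base_lin_linear a (x, z) (x', z')) fiber_lin_linear; ring.
Qed.

End ExtensionAffine.

Theorem proposition6p3 (R : realType) (n m d : nat)
  (br : 'rV[R]_n -> 'rV[R]_n -> 'rV[R]_m) :
  (1 <= d)%N ->
  step_two_carnot br ->
  ((forall f : 'rV[R]_n * 'rV[R]_m -> R, horiz_affine br f <-> affine f) <->
   (forall f : ('rV[R]_n * 'rV[R]_d) * 'rV[R]_m -> R,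
       horiz_affine (@br_ext R _ _ d br) f <-> affine f)).
Proof.
move=> _ [_ br_linl br_linr _ br_span].
split=> affine_eq f; split.
- by apply: horiz_affine_ext_affine => // g /affine_eq.
- exact/affine_horiz_affine/br_ext_linr.
- exact: (horiz_affine_affine_of_ext (fun F => (affine_eq F).1)).
- exact: affine_horiz_affine.
Qed.
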